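(* Let $\mathrm{Sch}$ be a schema with access methods (possibly result-bounded) and constraints $\Sigma$ consisting of inclusion dependencies, and let $Q$ be a Boolean conjunctive query that is access-determined over $\mathrm{Sch}$. Then $Q$ is access monotonically-determined over $\mathrm{Sch}$.
   Context: An inclusion dependency is a TGD $R(\vec x)\rightarrow\exists\vec y\,S(\vec z)$ with single body and head atoms and no repeated variables. A schema consists of a signature, constraints $\Sigma$, and access methods, each on a relation $R$ with input positions and possibly a result bound $k$. An access $(\mathrm{mt},\mathrm{AccBind})$ on instance $I$ binds the input positions to values of $I$; its matching tuples $M$ are the $R$-tuples agreeing with the binding; a valid output is $J\subseteq M$ with $J=M$ if no bound, and for result bound $k$, $|J|\le k$ and $\forall j\le k$: $|M|\ge j\Rightarrow|J|\ge j$. A valid access selection $\sigma$ maps each access to a valid output. The accessible part $\mathrm{AccPart}(\sigma,I)=\bigcup_i\mathrm{AccPart}_i$, where $\mathrm{AccPart}_0=\mathrm{accessible}_0=\emptyset$, $\mathrm{AccPart}_{i+1}$ is the union of the facts $\sigma(\mathrm{mt},\mathrm{AccBind})$ over all methods and bindings with values in $\mathrm{accessible}_i$, and $\mathrm{accessible}_{i+1}$ is the set of values of $\mathrm{AccPart}_{i+1}$. $Q$ is access monotonically-determined if for all instances $I_1,I_2$ satisfying $\Sigma$ with valid access selections $\sigma_1,\sigma_2$ such that $\mathrm{AccPart}(\sigma_1,I_1)\subseteq\mathrm{AccPart}(\sigma_2,I_2)$, we have $Q(I_1)\subseteq Q(I_2)$. $Q$ is access-determined if for all instances $I_1,I_2$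 satisfying $\Sigma$ with valid access selections $\sigma_1,\sigma_2$ such that $\mathrm{AccPart}(\sigma_1,I_1)=\mathrm{AccPart}(\sigma_2,I_2)$, we have $Q(I_1)=Q(I_2)$. Instances may be finite or infinite. *)

From Stdlib Require Import List Arith.
Import ListNotations.

Set Implicit Arguments.

(* R(x_0..x_{n-1}) -> exists y, S(z_0..z_{m-1}) is represented by its body
   relation R, its head relation S, and for each head position j either
   [Some i] (z_j is the body variable x_i, i.e. an exported variable) or
   [None] (z_j is an existentially quantified variable).  "No repeated
   variables" means: the map is injective on exported positions and the
   existential variables are pairwise distinct and distinct from body
   variables (the latter is implicit in this encoding). *)
Record ID (Rel : Type) := mkID {
  id_body : Rel;
  id_head : Rel;
  id_map  : nat -> option nat
}.

Record Schema (V : Type) := mkSchema {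
  Rel    : Type;
  ar     : Rel -> nat;
  Mth    : Type;
  mrel   : Mth -> Rel;
  minp   : Mth -> list nat;
  mbound : Mth -> option nat;
  sigma  : list (ID Rel)
}.

Arguments Rel {V}. Arguments ar {V} s _. Arguments Mth {V}.
Arguments mrel {V} s _. Arguments minp {V} s _. Arguments mbound {V} s _.
Arguments sigma {V} s.

Section Defs.
Variable V : Type.
Variable Sc : Schema V.

Definition fact := (Rel Sc * list V)%type.
Definition instance := fact -> Prop.

Definition wf_instance (I : instance) : Prop :=
  forall f, I f -> length (snd f) = ar Sc (fst f).

Definition adom (I : instance) (v : V) : Prop :=
  exists f, I f /\ In v (snd f).

Definition wf_ID (t : ID (Rel Sc)) : Prop :=
  (forall j i, j < ar Sc (id_head t) -> id_map t j = Some i ->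
     i < ar Sc (id_body t)) /\
  (forall j j' i, j < ar Sc (id_head t) -> j' < ar Sc (id_head t) ->
     id_map t j = Some i -> id_map t j' = Some i -> j = j').

Definition sat_ID (I : instance) (t : ID (Rel Sc)) : Prop :=
  forall a, I (id_body t, a) ->
    exists b, I (id_head t, b) /\
      forall j i, j < ar Sc (id_head t) -> id_map t j = Some i ->
        nth_error b j = nth_error a i.

Definition sat_Sigma (I : instance) : Prop :=
  forall t, In t (sigma Sc) -> sat_ID I t.

Definition wf_schema : Prop :=
  (exists l : list (Rel Sc), forall r, In r l) /\
  (exists l : list (Mth Sc), forall m, In m l) /\
  (forall m i, In i (minp Sc m) -> i < ar Sc (mrel Sc m)) /\
  (forall m, NoDup (minp Sc m)) /\
  (forall t, In t (sigma Sc) -> wf_ID t).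

Definition atleast (n : nat) (P : fact -> Prop) : Prop :=
  exists l, NoDup l /\ length l = n /\ forall x, In x l -> P x.
Definition atmost (n : nat) (P : fact -> Prop) : Prop :=
  exists l, length l <= n /\ forall x, P x -> In x l.

(* A binding for method m is the list of values given to the input positions
   [minp Sc m], in that order. *)
Definition binding_ok (m : Mth Sc) (b : list V) : Prop :=
  length b = length (minp Sc m).

Definition matching (I : instance) (m : Mth Sc) (b : list V) : fact -> Prop :=
  fun f => I f /\ fst f = mrel Sc m /\
           map (fun i => nth_error (snd f) i) (minp Sc m) = map (@Some V) b.

Definition valid_output (I : instance) (m : Mth Sc) (b : list V)
    (J : fact -> Prop) : Prop :=
  (forall f, J f -> matching I m b f) /\
  match mbound Sc m with
  | None => forall f, matching I m b f -> J f
  | Some k => atmost k J /\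
      forall j, j <= k -> atleast j (matching I m b) -> atleast j J
  end.

Definition selection := Mth Sc -> list V -> fact -> Prop.

Definition valid_selection (I : instance) (sg : selection) : Prop :=
  forall m b, binding_ok m b -> (forall v, In v b -> adom I v) ->
    valid_output I m b (sg m b).

Fixpoint accpart_i (sg : selection) (i : nat) : fact -> Prop :=
  match i with
  | 0 => fun _ => False
  | S i' => fun f => exists m b, binding_ok m b /\
        (forall v, In v b -> exists g, accpart_i sg i' g /\ In v (snd g)) /\
        sg m b f
  end.

Definition AccPart (sg : selection) : fact -> Prop :=
  fun f => exists i, accpart_i sg i f.

(* atoms over variables (numbered by nat); the query is the existential
   closure of the conjunction of its atoms *)
Definition atom := (Rel Sc * list nat)%type.
Definition BCQ := list atom.

Definition wf_BCQ (Q : BCQ) : Prop :=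
  forall at0, In at0 Q -> length (snd at0) = ar Sc (fst at0).

Definition holds (Q : BCQ) (I : instance) : Prop :=
  exists nu : nat -> V, forall at0, In at0 Q -> I (fst at0, map nu (snd at0)).

Definition access_determined (Q : BCQ) : Prop :=
  forall I1 I2 sg1 sg2,
    wf_instance I1 -> wf_instance I2 -> sat_Sigma I1 -> sat_Sigma I2 ->
    valid_selection I1 sg1 -> valid_selection I2 sg2 ->
    (forall f, AccPart sg1 f <-> AccPart sg2 f) ->
    (holds Q I1 <-> holds Q I2).

Definition access_mon_determined (Q : BCQ) : Prop :=
  forall I1 I2 sg1 sg2,
    wf_instance I1 -> wf_instance I2 -> sat_Sigma I1 -> sat_Sigma I2 ->
    valid_selection I1 sg1 -> valid_selection I2 sg2 ->
    (forall f, AccPart sg1 f -> AccPart sg2 f) ->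
    (holds Q I1 -> holds Q I2).

End Defs.

(* Collapse every value of I1 that is not sg1-accessible to one value c that
   is not sg2-accessible, and add the resulting facts to I2.  Inclusion
   dependencies survive homomorphic images and unions, and Q survives the
   homomorphism, so the merged instance satisfies the constraints and Q.
   On the merged instance, keep the sg2-outputs of all accesses whose inputs
   are sg2-accessible.  A collapsed fact can match such an access only if
   none of its input values was collapsed; then either sg1 returned all I1
   matches, so the fact is sg1-accessible and already in I2, or sg1 filled
   the result bound with facts that all lie in I2.  Either way the sg2-output
   stays valid, the accessible part is that of (I2, sg2), and
   access-determinacy moves Q from the merged instance to I2.  Such a c
   exists after renaming all values along g n |-> g (2 n), which frees g 1. *)

From Pilot Require Import Defs.
From Stdlib Require Import List Arith Lia Classical ClassicalEpsilon.
Import ListNotations.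

Section Outputs.
Set Implicit Arguments.
Context {V : Type} {Sc : Schema V}.
Implicit Types (P : Defs.fact Sc -> Prop) (I : instance Sc).

Lemma atleast_le P j n : j <= n -> atleast n P -> atleast j P.
Proof.
  intros Hjn [l [Hnd [Hl Hin]]]. exists (firstn j l).
  rewrite <- (firstn_skipn j l) in Hnd, Hin.
  split; [|split].
  - eapply NoDup_app_remove_r; eauto.
  - apply firstn_length_le; lia.
  - intros x Hx. apply Hin, in_or_app; auto.
Qed.

Lemma atleast_impl P P' n : (forall x, P x -> P' x) -> atleast n P -> atleast n P'.
Proof. intros H [l [Hnd [Hl Hin]]]. exists l; auto. Qed.

Lemma atleast_or_enum P k :
  atleast k P \/ exists l, NoDup l /\ length l < k /\ forall x, P x <-> In x l.
Proof.
  induction k as [|k [[l [Hnd [Hl Hin]]] | Hfin]].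
  - left. exists []. repeat split; [constructor | intros x []].
  - destruct (classic (exists x, P x /\ ~ In x l)) as [[x [Px Hx]] | Hnone].
    + left. exists (x :: l). split; [constructor; auto | split; [simpl; lia|]].
      intros y [<- | Hy]; auto.
    + right. exists l. split; [auto | split; [lia|]].
      intros x. split; [|auto].
      intros Px. apply NNPP. intros Hx. apply Hnone. eauto.
  - right. destruct Hfin as [l [Hnd [Hl Hin]]]. exists l. split; [auto | split; [lia | auto]].
Qed.

Lemma exists_valid_output I m b : exists J, valid_output I m b J.
Proof.
  unfold valid_output. destruct (mbound Sc m) as [k|].
  - destruct (atleast_or_enum (matching I m b) k) as [[l [Hnd [Hl Hin]]] | [l [Hnd [Hl Hin]]]].
    + exists (fun f => In f l). split; [auto | split].
      * exists l. split; [lia | auto].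
      * intros j Hj _. apply (atleast_le Hj). exists l; auto.
    + exists (matching I m b). split; [auto | split; [|auto]].
      exists l. split; [lia | apply Hin].
  - exists (matching I m b). split; auto.
Qed.

Lemma valid_output_full_or_atleast I m b J : valid_output I m b J ->
  (forall f, matching I m b f -> J f) \/
  exists k, mbound Sc m = Some k /\ atleast k J.
Proof.
  intros [Hsub Hbound]. destruct (mbound Sc m) as [k|]; [|left; auto].
  destruct Hbound as [_ Hlow].
  destruct (atleast_or_enum (matching I m b) k) as [Hk | [l [Hnd [Hl Hin]]]].
  - right. exists k. auto.
  - left. destruct (Hlow (length l)) as [l' [Hnd' [Hl' Hin']]].
    + lia.
    + exists l. split; [auto | split; [auto | apply Hin]].
    + assert (Hincl : incl l l').
      { apply NoDup_length_incl; [auto | lia |].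
        intros x Hx. apply Hin, Hsub, Hin'. auto. }
      intros f Hf. apply Hin', Hincl, Hin. auto.
Qed.

Lemma valid_output_fewer_matches I I' m b J :
  valid_output I m b J ->
  (forall f, matching I' m b f -> matching I m b f) ->
  (forall f, J f -> matching I' m b f) ->
  valid_output I' m b J.
Proof.
  intros [_ Hbound] Hmatch HJ. split; [auto|].
  destruct (mbound Sc m) as [k|]; [|auto].
  destruct Hbound as [Hmost Hlow]. split; [auto|].
  intros j Hj Hj'. apply Hlow; [auto|]. eapply atleast_impl; eauto.
Qed.

Lemma valid_output_saturated I I' m b J k :
  mbound Sc m = Some k -> valid_output I m b J -> atleast k J ->
  (forall f, J f -> matching I' m b f) ->
  valid_output I' m b J.
Proof.
  intros Hk [_ Hbound] HJk HJ. split; [auto|].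
  rewrite Hk in *. destruct Hbound as [Hmost _].
  split; [auto|]. intros j Hj _. eapply atleast_le; eauto.
Qed.

End Outputs.

Section AccessiblePart.
Set Implicit Arguments.
Context {V : Type} {Sc : Schema V}.
Implicit Types (sg : selection Sc) (I : instance Sc).

Definition accessible sg (v : V) : Prop := exists f, AccPart sg f /\ In v (snd f).

Lemma accpart_i_succ sg i f : accpart_i sg i f -> accpart_i sg (S i) f.
Proof.
  revert f. induction i as [|i IH]; intros f Hf; [destruct Hf|].
  destruct Hf as [m [b [Hok [Hb Hs]]]]. exists m, b. split; [auto | split; [|auto]].
  intros v Hv. destruct (Hb v Hv) as [g [Hg Hvg]]. exists g. auto.
Qed.

Lemma accpart_i_le sg i j f : i <= j -> accpart_i sg i f -> accpart_i sg j f.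
Proof. induction 1; auto using accpart_i_succ. Qed.

Lemma accessible_at_common_stage sg (b : list V) :
  (forall v, In v b -> accessible sg v) ->
  exists n, forall v, In v b -> exists g, accpart_i sg n g /\ In v (snd g).
Proof.
  induction b as [|a b IH]; intros Hb.
  - exists 0. intros v [].
  - destruct IH as [n Hn]; [intros v Hv; apply Hb; right; auto|].
    destruct (Hb a (or_introl eq_refl)) as [g [[i Hi] Hag]].
    exists (n + i). intros v [<- | Hv].
    + exists g. split; [eapply accpart_i_le; [|eauto]; lia | auto].
    + destruct (Hn v Hv) as [g' [Hg' Hvg']]. exists g'.
      split; [eapply accpart_i_le; [|eauto]; lia | auto].
Qed.

Lemma AccPart_output sg m b f :
  binding_ok Sc m b -> (forall v, In v b -> accessible sg v) -> sg m b f ->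
  AccPart sg f.
Proof.
  intros Hok Hb Hf. destruct (accessible_at_common_stage _ Hb) as [n Hn].
  exists (S n). exists m, b. auto.
Qed.

Lemma AccPart_sub_instance I sg : valid_selection I sg ->
  forall f, AccPart sg f -> I f.
Proof.
  intros Hsg f [i Hi]. revert f Hi. induction i as [|i IH]; intros f Hf; [destruct Hf|].
  destruct Hf as [m [b [Hok [Hb Hs]]]].
  assert (Hdom : forall v, In v b -> adom I v).
  { intros v Hv. destruct (Hb v Hv) as [g [Hg Hvg]]. exists g. auto. }
  apply (Hsg m b Hok Hdom). auto.
Qed.

Lemma accessible_adom I sg v : valid_selection I sg -> accessible sg v -> adom I v.
Proof.
  intros Hsg [g [Hg Hvg]]. exists g. split; [eapply AccPart_sub_instance|]; eauto.
Qed.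

End AccessiblePart.

Section Renaming.
Set Implicit Arguments.
Context {V : Type} {Sc : Schema V}.
Implicit Types (h : V -> V) (P : Defs.fact Sc -> Prop) (I : instance Sc) (Q : BCQ Sc).

Definition rename_fact h (f : Defs.fact Sc) : Defs.fact Sc := (fst f, map h (snd f)).

Definition image h P : Defs.fact Sc -> Prop :=
  fun f => exists f0, P f0 /\ f = rename_fact h f0.

Lemma wf_image h I : wf_instance I -> wf_instance (image h I).
Proof. intros HI f [f0 [Hf0 ->]]. simpl. rewrite length_map. auto. Qed.

Lemma sat_Sigma_image h I : sat_Sigma I -> sat_Sigma (image h I).
Proof.
  intros HI t Ht a [[r a0] [Hf0 Ha]]. injection Ha as Hr Ha. subst r a.
  destruct (HI t Ht a0 Hf0) as [b [Hb Hpos]]. exists (map h b). split.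
  - exists (id_head t, b). auto.
  - intros j i Hj Hi. rewrite !nth_error_map, (Hpos j i Hj Hi). reflexivity.
Qed.

Lemma sat_Sigma_union I I' : sat_Sigma I -> sat_Sigma I' -> sat_Sigma (fun f => I f \/ I' f).
Proof.
  intros HI HI' t Ht a [Ha | Ha].
  - destruct (HI t Ht a Ha) as [b [Hb Hpos]]. exists b. auto.
  - destruct (HI' t Ht a Ha) as [b [Hb Hpos]]. exists b. auto.
Qed.

Lemma holds_mono Q I I' : (forall f, I f -> I' f) -> holds Q I -> holds Q I'.
Proof. intros HII' [nu Hnu]. exists nu. auto. Qed.

Lemma holds_image h Q I : holds Q I -> holds Q (image h I).
Proof.
  intros [nu Hnu]. exists (fun x => h (nu x)). intros at0 Hat.
  exists (fst at0, map nu (snd at0)). split; [auto|].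
  unfold rename_fact. simpl. rewrite map_map. reflexivity.
Qed.

Section Retraction.
Variables e d : V -> V.
Hypothesis d_e : forall v, d (e v) = v.

Lemma map_retract (a : list V) : map d (map e a) = a.
Proof. rewrite map_map, (map_ext _ id d_e). apply map_id. Qed.

Lemma rename_fact_retract f : rename_fact d (rename_fact e f) = f.
Proof. destruct f as [r a]. unfold rename_fact. simpl. rewrite map_retract. reflexivity. Qed.

Lemma rename_fact_inj f f' : rename_fact e f = rename_fact e f' -> f = f'.
Proof. intros E. rewrite <- (rename_fact_retract f), E. apply rename_fact_retract. Qed.

Lemma image_retract P f :
  image e P f <-> P (rename_fact d f) /\ f = rename_fact e (rename_fact d f).
Proof.
  split.
  - intros [f0 [Hf0 ->]]. rewrite rename_fact_retract. auto.
  - intros [Hf Ef]. exists (rename_fact d f). auto.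
Qed.

Lemma image_rename_fact P f : image e P (rename_fact e f) <-> P f.
Proof. rewrite image_retract, rename_fact_retract. intuition. Qed.

Lemma atmost_image P k : atmost k P -> atmost k (image e P).
Proof.
  intros [l [Hl Hin]]. exists (map (rename_fact e) l). rewrite length_map. split; [auto|].
  intros x [x0 [Hx0 ->]]. apply in_map. auto.
Qed.

Lemma atleast_image P k : atleast k P -> atleast k (image e P).
Proof.
  intros [l [Hnd [Hl Hin]]]. exists (map (rename_fact e) l). rewrite length_map.
  split; [|split; [auto|]].
  - apply NoDup_map_NoDup_ForallPairs; [|auto]. intros x y _ _. apply rename_fact_inj.
  - intros x Hx. apply in_map_iff in Hx as [x0 [<- Hx0]]. apply image_rename_fact. auto.
Qed.

Lemma atleast_image_inv P k : atleast k (image e P) -> atleast k P.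
Proof.
  intros [l [Hnd [Hl Hin]]]. exists (map (rename_fact d) l). rewrite length_map.
  split; [|split; [auto|]].
  - apply (NoDup_map_inv (rename_fact e)). rewrite map_map.
    erewrite map_ext_in, map_id; [exact Hnd|].
    intros x Hx. symmetry. apply (image_retract P x), Hin. auto.
  - intros x Hx. apply in_map_iff in Hx as [y [<- Hy]]. apply image_retract, Hin. auto.
Qed.

Lemma holds_image_inv Q I : holds Q (image e I) -> holds Q I.
Proof.
  intros HQ. apply (holds_image d) in HQ. revert HQ. apply holds_mono.
  intros f [f0 [Hf0 ->]]. apply image_retract in Hf0. apply Hf0.
Qed.

Lemma option_map_retract (x : option V) v : option_map e x = Some (e v) <-> x = Some v.
Proof.
  destruct x as [u|]; simpl; split; intros H; try discriminate.
  - injection H as H. rewrite <- (d_e u), H, d_e. reflexivity.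
  - injection H as ->. reflexivity.
Qed.

Lemma selected_positions_rename (a b : list V) (l : list nat) :
  map (fun i => nth_error (map e a) i) l = map Some (map e b) <->
  map (fun i => nth_error a i) l = map Some b.
Proof.
  revert b. induction l as [|i l IH]; intros [|v b]; simpl; try (split; discriminate); [tauto|].
  rewrite nth_error_map. split; intros H; injection H as Hi Hl; f_equal.
  - apply option_map_retract. auto.
  - apply IH. auto.
  - apply option_map_retract. auto.
  - apply IH. auto.
Qed.

Lemma matching_image I m b f :
  matching (image e I) m (map e b) f <-> image e (matching I m b) f.
Proof.
  split.
  - intros [[[r a] [Hf0 ->]] [Hr Hpos]]. exists (r, a).
    split; [split; [auto | split; [auto|]]|reflexivity].
    apply (selected_positions_rename a b). auto.
  - intros [[r a] [[Hf0 [Hr Hpos]] ->]]. split; [exists (r, a); auto | split; [auto|]].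
    apply selected_positions_rename. auto.
Qed.

Lemma adom_image I v : adom (image e I) v -> exists u, adom I u /\ v = e u.
Proof.
  intros [f [[f0 [Hf0 ->]] Hv]]. apply in_map_iff in Hv as [u [<- Hu]].
  exists u. split; [exists f0; auto | reflexivity].
Qed.

Definition image_selection (sg : selection Sc) : selection Sc :=
  fun m b => image e (sg m (map d b)).

Lemma valid_selection_image I sg :
  valid_selection I sg -> valid_selection (image e I) (image_selection sg).
Proof.
  intros Hsg m b Hok Hdom.
  assert (Hb : b = map e (map d b)).
  { rewrite map_map, <- (map_id b) at 1. apply map_ext_in. intros v Hv.
    destruct (adom_image (Hdom v Hv)) as [u [_ ->]]. rewrite d_e. reflexivity. }
  assert (Hok' : binding_ok Sc m (map d b)).
  { unfold binding_ok in *. rewrite length_map. auto. }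
  assert (Hdom' : forall v, In v (map d b) -> adom I v).
  { intros v Hv. apply in_map_iff in Hv as [w [<- Hw]].
    destruct (adom_image (Hdom w Hw)) as [u [Hu ->]]. rewrite d_e. auto. }
  destruct (Hsg m (map d b) Hok' Hdom') as [Hsub Hbound].
  unfold image_selection. rewrite Hb at 1. split.
  - intros f [f0 [Hf0 ->]]. apply matching_image. exists f0. auto.
  - destruct (mbound Sc m) as [k|].
    + destruct Hbound as [Hmost Hlow]. split; [apply atmost_image; auto|].
      intros j Hj Hmatch. apply atleast_image, Hlow, atleast_image_inv; [auto|].
      eapply atleast_impl; [|exact Hmatch]. intros f Hf. apply matching_image. auto.
    + intros f Hf. apply matching_image in Hf as [f0 [Hf0 ->]]. exists f0. auto.
Qed.

Lemma accpart_i_image sg i f :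
  accpart_i (image_selection sg) i f <-> image e (accpart_i sg i) f.
Proof.
  revert f. induction i as [|i IH]; intros f.
  - split; [intros []|intros [f0 [[] _]]].
  - split.
    + intros [m [b [Hok [Hb [f0 [Hf0 ->]]]]]]. exists f0. split; [|reflexivity].
      exists m, (map d b). split; [unfold binding_ok in *; rewrite length_map; auto|].
      split; [|auto]. intros v Hv. apply in_map_iff in Hv as [w [<- Hw]].
      destruct (Hb w Hw) as [g [Hg Hwg]]. apply IH, image_retract in Hg as [Hg Eg].
      exists (rename_fact d g). split; [auto|].
      simpl. apply in_map. auto.
    + intros [f0 [[m [b [Hok [Hb Hf0]]]] ->]]. exists m, (map e b).
      split; [unfold binding_ok in *; rewrite length_map; auto|]. split.
      * intros v Hv. apply in_map_iff in Hv as [u [<- Hu]].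
        destruct (Hb u Hu) as [g [Hg Hug]]. exists (rename_fact e g).
        split; [apply IH, image_rename_fact; auto | apply in_map; auto].
      * unfold image_selection. rewrite map_retract. exists f0. auto.
Qed.

Lemma AccPart_image sg f : AccPart (image_selection sg) f <-> image e (AccPart sg) f.
Proof.
  split.
  - intros [i Hi]. apply accpart_i_image in Hi as [f0 [Hf0 ->]].
    exists f0. split; [exists i|]; auto.
  - intros [f0 [[i Hi] ->]]. exists i. apply accpart_i_image. exists f0. auto.
Qed.

Lemma accessible_image_selection sg v :
  accessible (image_selection sg) v -> exists u, v = e u.
Proof.
  intros [f [Hf Hv]]. apply AccPart_image in Hf as [f0 [_ ->]].
  apply in_map_iff in Hv as [u [<- _]]. exists u. reflexivity.
Qed.

End Retraction.
End Renaming.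

Section Collapse.
Set Implicit Arguments.
Context {V : Type} {Sc : Schema V}.
Variables (I1 I2 : instance Sc) (sg1 sg2 : selection Sc) (c : V).
Hypotheses (wf1 : wf_instance I1) (wf2 : wf_instance I2)
  (sat1 : sat_Sigma I1) (sat2 : sat_Sigma I2)
  (valid1 : valid_selection I1 sg1) (valid2 : valid_selection I2 sg2)
  (AccPart_incl : forall f, AccPart sg1 f -> AccPart sg2 f)
  (c_fresh : ~ accessible sg2 c).

Definition collapse (v : V) : V :=
  if excluded_middle_informative (accessible sg1 v) then v else c.

Definition merged : instance Sc := fun f => I2 f \/ image collapse I1 f.

Lemma collapse_AccPart f : AccPart sg1 f -> rename_fact collapse f = f.
Proof.
  intros Hf. destruct f as [r a]. unfold rename_fact. simpl. f_equal.
  rewrite <- (map_id a) at 2. apply map_ext_in. intros v Hv. unfold collapse.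
  destruct (excluded_middle_informative (accessible sg1 v)) as [_ | Hnot]; [reflexivity|].
  exfalso. apply Hnot. exists (r, a). auto.
Qed.

Lemma collapse_accessible u :
  accessible sg2 (collapse u) -> accessible sg1 u /\ collapse u = u.
Proof.
  unfold collapse. destruct (excluded_middle_informative (accessible sg1 u)); tauto.
Qed.

Lemma selected_positions_collapse (a b : list V) (l : list nat) :
  (forall v, In v b -> accessible sg2 v) ->
  map (fun i => nth_error (map collapse a) i) l = map Some b ->
  map (fun i => nth_error a i) l = map Some b /\ forall v, In v b -> accessible sg1 v.
Proof.
  revert b. induction l as [|i l IH]; intros [|v b] Hb H; try discriminate.
  - split; [reflexivity | intros v []].
  - simpl in H. injection H as Hi Hl. rewrite nth_error_map in Hi.
    destruct (nth_error a i) as [u|] eqn:Hu; [|discriminate]. injection Hi as Hv.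
    destruct (collapse_accessible u) as [Hu1 Hcu]; [rewrite Hv; apply Hb; left; auto|].
    destruct (IH b) as [Hpos Hb1]; [intros w Hw; apply Hb; right; auto | auto |].
    split.
    + simpl. rewrite Hu, Hpos, <- Hv, Hcu. reflexivity.
    + intros w [<- | Hw]; [rewrite <- Hv, Hcu|]; auto.
Qed.

Lemma AccPart1_in_I2 f : AccPart sg1 f -> I2 f.
Proof. intros Hf. apply (AccPart_sub_instance valid2), AccPart_incl. auto. Qed.

Lemma output1_matching_I2 m b f :
  binding_ok Sc m b -> (forall v, In v b -> accessible sg1 v) -> sg1 m b f ->
  matching I2 m b f.
Proof.
  intros Hok Hb Hf.
  assert (Hdom : forall v, In v b -> adom I1 v).
  { intros v Hv. eapply accessible_adom; eauto. }
  destruct ((proj1 (valid1 Hok Hdom)) f Hf) as [_ Hpos].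
  split; [apply AccPart1_in_I2; eapply AccPart_output|]; eauto.
Qed.

Lemma merged_matching_in_I2 m b f :
  binding_ok Sc m b -> (forall v, In v b -> accessible sg2 v) ->
  ((forall v, In v b -> accessible sg1 v) ->
     forall f0, matching I1 m b f0 -> sg1 m b f0) ->
  matching merged m b f -> matching I2 m b f.
Proof.
  intros Hok Hb Hfull [[Hf | [[r a] [Hf0 ->]]] [Hr Hpos]]; [split; auto|].
  destruct (selected_positions_collapse a b _ Hb Hpos) as [Hpos0 Hb1].
  assert (Hsel : sg1 m b (r, a)) by (apply Hfull; [|split; [|split]]; auto).
  rewrite collapse_AccPart; [|eapply AccPart_output; eauto].
  eapply output1_matching_I2; eauto.
Qed.

Lemma valid_output_merged m b :
  binding_ok Sc m b -> (forall v, In v b -> accessible sg2 v) ->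
  valid_output merged m b (sg2 m b).
Proof.
  intros Hok Hb.
  assert (Hdom2 : forall v, In v b -> adom I2 v).
  { intros v Hv. eapply accessible_adom; eauto. }
  pose proof (valid2 Hok Hdom2) as Hvalid2.
  assert (Hout : forall f, sg2 m b f -> matching merged m b f).
  { intros f Hf. destruct ((proj1 Hvalid2) f Hf) as [HI2 Hpos]. split; [left|]; auto. }
  destruct (classic ((forall v, In v b -> accessible sg1 v) ->
                      forall f0, matching I1 m b f0 -> sg1 m b f0)) as [Hfull | Hpartial].
  - apply (valid_output_fewer_matches Hvalid2); [|auto].
    intros f. apply merged_matching_in_I2; auto.
  - apply imply_to_and in Hpartial as [Hb1 Hpartial].
    assert (Hdom1 : forall v, In v b -> adom I1 v).
    { intros v Hv. eapply accessible_adom; eauto. }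
    destruct (valid_output_full_or_atleast (valid1 Hok Hdom1)) as [| [k [Hk Hk1]]];
      [contradiction|].
    apply (valid_output_saturated Hk Hvalid2); [|auto].
    destruct Hvalid2 as [_ Hbound]. rewrite Hk in Hbound. apply Hbound; [auto|].
    eapply atleast_impl; [|exact Hk1]. intros f. apply output1_matching_I2; auto.
Qed.

Definition merged_selection : selection Sc := fun m b =>
  if excluded_middle_informative (forall v, In v b -> accessible sg2 v) then sg2 m b
  else proj1_sig (constructive_indefinite_description _ (exists_valid_output merged m b)).

Lemma valid_merged_selection : valid_selection merged merged_selection.
Proof.
  intros m b Hok _. unfold merged_selection.
  destruct (excluded_middle_informative _) as [Hb | _].
  - apply valid_output_merged; auto.
  - apply proj2_sig.
Qed.

Lemma accpart_i_merged_selection i f : accpart_i merged_selection i f <-> accpart_i sg2 i f.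
Proof.
  revert f. induction i as [|i IH]; intros f; [reflexivity|].
  assert (Hinputs : forall b : list V,
    (forall v, In v b -> exists g, accpart_i merged_selection i g /\ In v (snd g)) <->
    (forall v, In v b -> exists g, accpart_i sg2 i g /\ In v (snd g))).
  { intros b. split; intros Hb v Hv; destruct (Hb v Hv) as [g [Hg Hvg]];
      exists g; rewrite IH in *; auto. }
  assert (Hsel : forall m b,
    (forall v, In v b -> exists g, accpart_i sg2 i g /\ In v (snd g)) ->
    merged_selection m b = sg2 m b).
  { intros m b Hb. unfold merged_selection.
    destruct (excluded_middle_informative _) as [_ | Hnot]; [reflexivity|].
    exfalso. apply Hnot. intros v Hv. destruct (Hb v Hv) as [g [Hg Hvg]].
    exists g. split; [exists i|]; auto. }
  simpl. setoid_rewrite Hinputs.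
  split; intros [m [b [Hok [Hb Hf]]]]; exists m, b;
    [rewrite <- Hsel | rewrite Hsel]; auto.
Qed.

Lemma holds_merged (Q : BCQ Sc) : holds Q I1 -> holds Q merged.
Proof.
  intros HQ. apply (holds_mono (I := image collapse I1)); [|apply holds_image; auto].
  intros f Hf. right. auto.
Qed.

Lemma holds_transfer (Q : BCQ Sc) : access_determined Q -> holds Q I1 -> holds Q I2.
Proof.
  intros AD HQ.
  apply (AD merged I2 merged_selection sg2); auto.
  - intros f [Hf | Hf]; [apply wf2 | apply (wf_image (h := collapse) wf1)]; auto.
  - apply sat_Sigma_union; [|apply sat_Sigma_image]; auto.
  - apply valid_merged_selection.
  - intros f. split; intros [i Hi]; exists i; apply accpart_i_merged_selection; auto.
  - apply holds_merged. auto.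
Qed.

End Collapse.

Section HilbertHotel.
Set Implicit Arguments.
Context {V : Type}.
Variable g : nat -> V.
Hypothesis g_inj : forall x y, g x = g y -> x = y.

Definition index_of (v : V) : option nat :=
  match excluded_middle_informative (exists n, g n = v) with
  | left H => Some (proj1_sig (constructive_indefinite_description _ H))
  | right _ => None
  end.

Lemma index_ofP v :
  match index_of v with Some n => g n = v | None => forall n, g n <> v end.
Proof.
  unfold index_of. destruct (excluded_middle_informative _) as [H | H].
  - apply proj2_sig.
  - intros n Hn. apply H. exists n. auto.
Qed.

Definition shift (v : V) : V :=
  match index_of v with Some n => g (2 * n) | None => v end.
Definition unshift (v : V) : V :=
  match index_of v with Some n => g (Nat.div2 n) | None => v end.

Lemma unshift_shift v : unshift (shift v) = v.
Proof.
  unfold shift. pose proof (index_ofP v) as Hv. destruct (index_of v) as [n|] eqn:E.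
  - unfold unshift. pose proof (index_ofP (g (2 * n))) as Hn.
    destruct (index_of (g (2 * n))) as [m|].
    + apply g_inj in Hn. subst m. rewrite Nat.div2_double. auto.
    + exfalso. apply (Hn (2 * n)). reflexivity.
  - unfold unshift. rewrite E. reflexivity.
Qed.

Lemma shift_neq_g1 v : shift v <> g 1.
Proof.
  unfold shift. pose proof (index_ofP v) as Hv. destruct (index_of v) as [n|].
  - intros H. apply g_inj in H. lia.
  - intros H. apply (Hv 1). auto.
Qed.

End HilbertHotel.

Theorem mainTheorem14 (V : Type)
  (Vinf : exists g : nat -> V, forall x y, g x = g y -> x = y)
  (Sch : Schema V) (Q : BCQ Sch) :
  wf_schema Sch -> wf_BCQ Q ->
  access_determined Q -> access_mon_determined Q.
Proof.
  intros _ _ AD I1 I2 sg1 sg2 wf1 wf2 sat1 sat2 valid1 valid2 Hincl HQ.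
  destruct Vinf as [g g_inj].
  pose proof (unshift_shift g g_inj) as Hret.
  apply (holds_image_inv _ Hret).
  apply (holds_transfer (I1 := image (shift g) I1) (c := g 1)
           (sg1 := image_selection (shift g) (unshift g) sg1)
           (sg2 := image_selection (shift g) (unshift g) sg2));
    auto using wf_image, sat_Sigma_image, valid_selection_image, holds_image.
  - intros f Hf. apply (AccPart_image _ _ Hret) in Hf as [f0 [Hf0 ->]].
    apply (AccPart_image _ _ Hret). exists f0. auto.
  - intros Hacc. apply (accessible_image_selection Hret) in Hacc as [u Hu].
    apply (shift_neq_g1 g g_inj u). auto.
Qed.
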